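(* Let $(\mathcal{F},\mathcal{F}_d,R)$ be a justification frame, $x\in\mathcal{F}_d$, let $\mathbb{B}$ be a branch selection for $x$, and let $x\gets A$ be a rule in $R$. Then there exists $y^*\in A$ such that for every $J_{y^*}\in\mathfrak{J}(y^* )$, $\mathbb{B}$ contains at least one branch of the form $x\to y^*\to b$ where $y^*\to b$ is a branch of $J_{y^*}$ starting from its root.
   Context: A fact space is a set $\mathcal{F}$ containing $\mathcal{L}=\{\mathbf{t},\mathbf{f},\mathbf{u}\}$, equipped with an involution $\sim$ with $\sim\mathbf{t}=\mathbf{f}$, $\sim\mathbf{u}=\mathbf{u}$, $\sim x\ne x$ for $x\ne\mathbf{u}$. A justification frame is $(\mathcal{F},\mathcal{F}_d,R)$ with defined facts $\mathcal{F}_d\subseteq\mathcal{F}$, $\sim\mathcal{F}_d=\mathcal{F}_d$, $\mathcal{L}\cap\mathcal{F}_d=\emptyset$, and rules $R\subseteq\mathcal{F}_d\times2^{\mathcal{F}}$ written $x\gets A$, such that each $x\in\mathcal{F}_d$ has a rule with nonempty body and no rule with empty body; open facts $\mathcal{F}_o=\mathcal{F}\setminus\mathcal{F}_d$. A (tree-like) justification is a directed labeled forest whose internal nodes $n$ are labeled by defined facts with $\ell(n)\gets\{\ell(m): (n,m)\text{ an edge}\}\in R$; it is locally complete if no leaf is labeled by a defined fact; it is rooted in $x$ if a node labeled $x$ reaches all nodes. $\mathfrak{J}(x)$ is the set of locally complete justifications rooted in $x$; for an open fact $y$, $\mathfrak{J}(y)$ consists only of the single-node justification labeled $y$ (whose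 only branch is $y$). A branch is an infinite sequence of defined facts or a finite sequence of defined facts followed by an open fact. A $J$-branch starting in $x$ is a path in $J$ from the root node labeled $x$ that is infinite or ends in a leaf. A branch selection for $x$ is a set $\mathbb{B}$ of branches starting in $x$ such that for each locally complete justification $J$ rooted in $x$, $\mathbb{B}$ contains at least one $J$-branch starting in $x$. *)

From Stdlib Require Import Relations.

Set Implicit Arguments.

Definition is_fact_space (F : Type) (neg : F -> F) (t f u : F) : Prop :=
  t <> f /\ t <> u /\ f <> u /\
  (forall x, neg (neg x) = x) /\
  neg t = f /\ neg u = u /\
  (forall x, x <> u -> neg x <> x).

Definition is_justification_frame (F : Type) (neg : F -> F) (t f u : F)
    (Fd : F -> Prop) (R : F -> (F -> Prop) -> Prop) : Prop :=
  is_fact_space neg t f u /\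
  (forall x, Fd x <-> Fd (neg x)) /\
  ~ Fd t /\ ~ Fd f /\ ~ Fd u /\
  (forall x A, R x A -> Fd x) /\
  (forall x, Fd x -> exists A, R x A /\ exists y, A y) /\
  (forall x A, R x A -> exists y, A y).

Record labeled_graph (F : Type) := LabeledGraph {
  node : Type;
  edge : node -> node -> Prop;
  lab : node -> F
}.

Definition is_forest (F : Type) (J : labeled_graph F) : Prop :=
  (forall n1 n2 m, edge J n1 m -> edge J n2 m -> n1 = n2) /\
  (forall n, ~ clos_trans _ (@edge F J) n n).

Definition is_leaf (F : Type) (J : labeled_graph F) (n : node J) : Prop :=
  forall m, ~ edge J n m.

Definition is_justification (F : Type) (Fd : F -> Prop) (R : F -> (F -> Prop) -> Prop)
    (J : labeled_graph F) : Prop :=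
  is_forest J /\
  (forall n, ~ is_leaf J n ->
     Fd (lab J n) /\ R (lab J n) (fun y => exists m, edge J n m /\ lab J m = y)).

Definition locally_complete (F : Type) (Fd : F -> Prop) (J : labeled_graph F) : Prop :=
  forall n, is_leaf J n -> ~ Fd (lab J n).

Definition rooted_in (F : Type) (J : labeled_graph F) (r : node J) (x : F) : Prop :=
  lab J r = x /\ forall n, clos_refl_trans _ (@edge F J) r n.

Definition in_frakJ (F : Type) (Fd : F -> Prop) (R : F -> (F -> Prop) -> Prop)
    (x : F) (J : labeled_graph F) (r : node J) : Prop :=
  is_justification Fd R J /\ locally_complete Fd J /\ rooted_in J r x.

(* Sequences of facts: b i = Some (i-th fact), None past the end of a finite sequence. *)
Definition fseq (F : Type) := nat -> option F.

Definition is_branch (F : Type) (Fd : F -> Prop) (b : fseq F) : Prop :=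
  (forall i, exists y, b i = Some y /\ Fd y) \/
  (exists n y, b n = Some y /\ ~ Fd y /\
     (forall i, i < n -> exists z, b i = Some z /\ Fd z) /\
     (forall i, n < i -> b i = None)).

Definition starts_in (F : Type) (b : fseq F) (x : F) : Prop := b 0 = Some x.

Definition is_J_branch (F : Type) (J : labeled_graph F) (r : node J) (b : fseq F) : Prop :=
  (exists p : nat -> node J, p 0 = r /\
     (forall i, edge J (p i) (p (S i))) /\
     (forall i, b i = Some (lab J (p i)))) \/
  (exists (p : nat -> node J) (n : nat), p 0 = r /\
     (forall i, i < n -> edge J (p i) (p (S i))) /\
     is_leaf J (p n) /\
     (forall i, i <= n -> b i = Some (lab J (p i))) /\
     (forall i, n < i -> b i = None)).

Definition branch_selection (F : Type) (Fd : F -> Prop) (R : F -> (F -> Prop) -> Prop)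
    (x : F) (B : fseq F -> Prop) : Prop :=
  (forall b, B b -> is_branch Fd b /\ starts_in b x) /\
  (forall (J : labeled_graph F) (r : node J), in_frakJ Fd R x J r ->
     exists b, is_J_branch J r b /\ B b).

Definition fcons (F : Type) (x : F) (b : fseq F) : fseq F :=
  fun n => match n with 0 => Some x | S k => b k end.

(* Suppose no y in A works: then every y in A has a justification J_y in J(y) none
   of whose branches b is selected in the form x -> b.  Grafting all the J_y under a
   new root labelled x gives a locally complete justification rooted in x (its root
   uses the rule x <- A), so the branch selection contains one of its branches.  That
   branch passes from the root to the root of a single J_y and stays there, so it is
   x -> b for a branch b of J_y, a contradiction. *)
From Stdlib Require Import Relations Classical ClassicalEpsilon FunctionalExtensionality
  PropExtensionality Eqdep Lia.
Set Implicit Arguments.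

Lemma rooted_forest_root_no_parent (F : Type) (J : labeled_graph F) (r : node J) :
  is_forest J -> (forall n, clos_refl_trans _ (@edge F J) r n) ->
  forall k, ~ edge J k r.
Proof.
  intros [_ Hacyclic] Hreach k Hkr.
  apply (Hacyclic r), clos_rt_t with k; [apply Hreach | constructor; exact Hkr].
Qed.

Lemma fcons_head_tail (F : Type) (x : F) (b : fseq F) :
  b 0 = Some x -> b = fcons x (fun k => b (S k)).
Proof.
  intro Hb0; extensionality k; destruct k; [exact Hb0 | reflexivity].
Qed.

Lemma image_proj1_sig (F : Type) (A : F -> Prop) :
  (fun z => exists i : {y | A y}, proj1_sig i = z) = A.
Proof.
  extensionality z; apply propositional_extensionality; split.
  - intros [[y Hy] <-]; exact Hy.
  - intro Hz; exists (exist _ z Hz); reflexivity.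
Qed.

Section Graft.

Variables (F I : Type) (G : I -> labeled_graph F) (rt : forall i, node (G i)) (x : F).

Definition graft_node : Type := option {i : I & node (G i)}.

Local Notation graft_in i n := (Some (existT (fun i => node (G i)) i n)).

Inductive graft_edge : graft_node -> graft_node -> Prop :=
| graft_edge_root i : graft_edge None (graft_in i (rt i))
| graft_edge_in i n m : edge (G i) n m -> graft_edge (graft_in i n) (graft_in i m).

Definition graft_lab (o : graft_node) : F :=
  match o with None => x | Some (existT _ i n) => lab (G i) n end.

Definition graft : labeled_graph F := LabeledGraph graft_edge graft_lab.

Ltac inj_existT :=
  repeat match goal with H : existT _ _ _ = existT _ _ _ |- _ => apply inj_pair2 in H end;
  subst.

Lemma graft_edge_rootE o : graft_edge None o -> exists i, o = graft_in i (rt i).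
Proof. intro E; inversion E; eauto. Qed.

Lemma graft_edge_inE i n o :
  graft_edge (graft_in i n) o -> exists m, o = graft_in i m /\ edge (G i) n m.
Proof. intro E; inversion E; inj_existT; eauto. Qed.

Lemma graft_edge_in_inv i n m : graft_edge (graft_in i n) (graft_in i m) -> edge (G i) n m.
Proof. intro E; inversion E; inj_existT; assumption. Qed.

Lemma graft_edge_intoE o i n :
  graft_edge o (graft_in i n) ->
  (o = None /\ n = rt i) \/ exists m, o = graft_in i m /\ edge (G i) m n.
Proof. intro E; inversion E; inj_existT; eauto. Qed.

Lemma graft_is_leaf_in i n : is_leaf graft (graft_in i n) <-> is_leaf (G i) n.
Proof.
  split.
  - intros Hleaf m E; apply (Hleaf (graft_in i m)); constructor; exact E.
  - intros Hleaf o E; destruct (graft_edge_inE E) as [m [_ Em]]; exact (Hleaf m Em).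
Qed.

Lemma graft_root_not_leaf (i0 : I) : ~ is_leaf graft None.
Proof. intro Hleaf; apply (Hleaf (graft_in i0 (rt i0))); constructor. Qed.

Lemma graft_root_no_ancestor o : ~ clos_trans _ graft_edge o None.
Proof. intro H; apply clos_trans_tn1 in H; inversion H as [? E | ? ? E]; inversion E. Qed.

Lemma graft_clos_trans_intoE o i n :
  clos_trans _ graft_edge o (graft_in i n) ->
  o = None \/ exists m, o = graft_in i m /\ clos_trans _ (edge (G i)) m n.
Proof.
  intro H; apply clos_trans_tn1 in H.
  remember (graft_in i n) as target eqn:Htarget; revert n Htarget.
  induction H as [o' E | o' o'' E H IH]; intros n Htarget; subst.
  - destruct (graft_edge_intoE E) as [[-> _] | [m [-> Em]]]; [now left|].
    right; exists m; split; [reflexivity | constructor; exact Em].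
  - destruct (graft_edge_intoE E) as [[-> _] | [m [-> Em]]].
    + exfalso; apply (@graft_root_no_ancestor o), clos_tn1_trans, H.
    + destruct (IH m eq_refl) as [? | [k [-> Hk]]]; [now left|].
      right; exists k; split; [reflexivity | apply t_trans with m; auto using t_step].
Qed.

Lemma graft_reach_in i m n :
  clos_refl_trans _ (edge (G i)) m n ->
  clos_refl_trans _ graft_edge (graft_in i m) (graft_in i n).
Proof.
  induction 1; [apply rt_step; constructor; assumption | apply rt_refl | eapply rt_trans; eauto].
Qed.

Lemma graft_is_forest :
  (forall i, is_forest (G i)) ->
  (forall i n, clos_refl_trans _ (edge (G i)) (rt i) n) ->
  is_forest graft.
Proof.
  intros Hforest Hreach; split.
  - intros o1 o2 [[i m] |] E1 E2; [| inversion E1].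
    pose proof (rooted_forest_root_no_parent (Hforest i) (Hreach i)) as Hroot.
    destruct (graft_edge_intoE E1) as [[-> ->] | [k1 [-> Ek1]]],
             (graft_edge_intoE E2) as [[-> Em] | [k2 [-> Ek2]]]; subst.
    + reflexivity.
    + contradiction (Hroot k2).
    + contradiction (Hroot k1).
    + destruct (Hforest i) as [Hparent _]; rewrite (Hparent k1 k2 m Ek1 Ek2); reflexivity.
  - intros [[i n] |] Hcycle.
    + destruct (graft_clos_trans_intoE Hcycle) as [? | [m [Hm Hc]]]; [discriminate|].
      injection Hm; intro; inj_existT; exact (proj2 (Hforest i) m Hc).
    + exact (graft_root_no_ancestor Hcycle).
Qed.

Lemma graft_children_in i n :
  (fun z => exists o, graft_edge (graft_in i n) o /\ graft_lab o = z) =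
  (fun z => exists m, edge (G i) n m /\ lab (G i) m = z).
Proof.
  extensionality z; apply propositional_extensionality; split.
  - intros [o [E <-]]; destruct (graft_edge_inE E) as [m [-> Em]]; eauto.
  - intros [m [Em <-]]; exists (graft_in i m); split; [constructor; exact Em | reflexivity].
Qed.

Lemma graft_children_root (y : I -> F) :
  (forall i, lab (G i) (rt i) = y i) ->
  (fun z => exists o, graft_edge None o /\ graft_lab o = z) = (fun z => exists i, y i = z).
Proof.
  intro Hlab; extensionality z; apply propositional_extensionality; split.
  - intros [o [E <-]]; destruct (graft_edge_rootE E) as [i ->]; exists i; symmetry; apply Hlab.
  - intros [i <-]; exists (graft_in i (rt i)); split; [constructor | apply Hlab].
Qed.

Lemma graft_in_frakJ (Fd : F -> Prop) (R : F -> (F -> Prop) -> Prop) (y : I -> F) (i0 : I) :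
  Fd x -> R x (fun z => exists i, y i = z) ->
  (forall i, in_frakJ Fd R (y i) (G i) (rt i)) ->
  in_frakJ Fd R x graft None.
Proof.
  intros Hx HR HG; split; [split | split].
  - apply graft_is_forest; intro i; apply (HG i).
  - intros [[i n] |] Hinternal; simpl.
    + rewrite graft_children_in; apply (HG i).
      intro Hleaf; apply Hinternal, graft_is_leaf_in, Hleaf.
    + rewrite (graft_children_root y); [split; assumption | intro i; apply (HG i)].
  - intros [[i n] |] Hleaf; simpl.
    + apply (HG i), graft_is_leaf_in, Hleaf.
    + contradiction (graft_root_not_leaf i0).
  - split; [reflexivity|].
    intros [[i n] |]; [| apply rt_refl].
    apply rt_trans with (graft_in i (rt i)); [apply rt_step; constructor |].
    apply graft_reach_in, (HG i).
Qed.

(* A chosen preimage in [G j]; meaningful only on nodes of the form [graft_in j m]. *)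
Definition graft_proj (j : I) (o : graft_node) : node (G j) :=
  epsilon (inhabits (rt j)) (fun m => o = graft_in j m).

Lemma graft_proj_in j m : graft_proj j (graft_in j m) = m.
Proof.
  unfold graft_proj.
  pose proof (epsilon_spec (inhabits (rt j)) (fun m' => graft_in j m = graft_in j m')
                (ex_intro _ m eq_refl)) as E.
  injection E as E; apply inj_pair2 in E; symmetry; exact E.
Qed.

Lemma graft_path_stays (p : nat -> graft_node) j m n :
  p 0 = graft_in j m -> (forall i, i < n -> graft_edge (p i) (p (S i))) ->
  forall i, i <= n -> p i = graft_in j (graft_proj j (p i)).
Proof.
  intros Hp0 Hedge; induction i as [| i IH]; intro Hi.
  - rewrite Hp0, graft_proj_in; reflexivity.
  - pose proof (Hedge i ltac:(lia)) as E; rewrite (IH ltac:(lia)) in E.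
    destruct (graft_edge_inE E) as [m' [-> _]]; rewrite graft_proj_in; reflexivity.
Qed.

Lemma graft_first_step (p : nat -> graft_node) :
  p 0 = None -> graft_edge (p 0) (p 1) -> exists j, p 1 = graft_in j (rt j).
Proof. intros Hp0 E; rewrite Hp0 in E; exact (graft_edge_rootE E). Qed.

Lemma graft_J_branch_inv (i0 : I) (b : fseq F) :
  is_J_branch graft None b ->
  exists j b', is_J_branch (G j) (rt j) b' /\ b = fcons x b'.
Proof.
  intros [[p [Hp0 [Hedge Hb]]] | [p [n [Hp0 [Hedge [Hleaf [Hb Hend]]]]]]].
  - destruct (graft_first_step p Hp0 (Hedge 0)) as [j Hp1].
    pose (q := fun k => graft_proj j (p (S k))).
    assert (Hq : forall k, p (S k) = graft_in j (q k))
      by (intro k; exact (graft_path_stays (fun k => p (S k)) Hp1 (fun i _ => Hedge (S i))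
                            (le_n k))).
    exists j, (fun k => b (S k)); split.
    + left; exists q; split; [| split].
      * unfold q; rewrite Hp1, graft_proj_in; reflexivity.
      * intro i; apply graft_edge_in_inv; rewrite <- !Hq; apply Hedge.
      * intro i; rewrite Hb, Hq; reflexivity.
    + apply fcons_head_tail; rewrite Hb, Hp0; reflexivity.
  - destruct n as [| n].
    + rewrite Hp0 in Hleaf; contradiction (graft_root_not_leaf i0).
    + destruct (graft_first_step p Hp0 (Hedge 0 ltac:(lia))) as [j Hp1].
      pose (q := fun k => graft_proj j (p (S k))).
      assert (Hq : forall k, k <= n -> p (S k) = graft_in j (q k))
        by exact (graft_path_stays (fun k => p (S k)) Hp1
                    (fun i (Hi : i < n) => Hedge (S i) ltac:(lia))).
      exists j, (fun k => b (S k)); split.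
      * right; exists q, n; split; [| split; [| split; [| split]]].
        -- unfold q; rewrite Hp1, graft_proj_in; reflexivity.
        -- intros i Hi; apply graft_edge_in_inv.
           rewrite <- (Hq i), <- (Hq (S i)) by lia; apply Hedge; lia.
        -- apply graft_is_leaf_in; rewrite <- (Hq n) by lia; exact Hleaf.
        -- intros i Hi; rewrite Hb, Hq by lia; reflexivity.
        -- intros i Hi; apply Hend; lia.
      * apply fcons_head_tail; rewrite Hb, Hp0 by lia; reflexivity.
Qed.

End Graft.

Theorem mainTheorem2 (F : Type) (neg : F -> F) (t f u : F)
    (Fd : F -> Prop) (R : F -> (F -> Prop) -> Prop)
    (Hframe : is_justification_frame neg t f u Fd R)
    (x : F) (Hx : Fd x) (B : fseq F -> Prop) (HB : branch_selection Fd R x B)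
    (A : F -> Prop) (HA : R x A) :
  exists ystar, A ystar /\
    forall (J : labeled_graph F) (r : node J), in_frakJ Fd R ystar J r ->
      exists b, is_J_branch J r b /\ B (fcons x b).
Proof.
  destruct Hframe as [_ [_ [_ [_ [_ [_ [_ Hbody]]]]]]].
  destruct (Hbody x A HA) as [y0 Hy0].
  apply NNPP; intro Hnone.
  assert (Hcounter : forall i : {y | A y}, exists s : {J : labeled_graph F & node J},
             in_frakJ Fd R (proj1_sig i) (projT1 s) (projT2 s) /\
             forall b, is_J_branch (projT1 s) (projT2 s) b -> ~ B (fcons x b)).
  { intros [y Hy]; apply NNPP; intro Hs; apply Hnone; exists y; split; [exact Hy |].
    intros J r HJ; apply NNPP; intro Hb; apply Hs; exists (existT _ J r).
    split; [exact HJ |]; intros b Hjb HBb; apply Hb; eauto. }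
  pose (s := fun i => proj1_sig (constructive_indefinite_description _ (Hcounter i))).
  assert (Hs := fun i => proj2_sig (constructive_indefinite_description _ (Hcounter i))).
  assert (Hgraft : in_frakJ Fd R x (graft (fun i => projT1 (s i)) (fun i => projT2 (s i)) x)
                     None).
  { apply (@graft_in_frakJ F {y | A y} _ _ x Fd R (@proj1_sig F A) (exist _ y0 Hy0) Hx).
    - rewrite image_proj1_sig; exact HA.
    - intro i; apply (Hs i). }
  destruct (proj2 HB _ _ Hgraft) as [b [Hb HBb]].
  destruct (graft_J_branch_inv (exist _ y0 Hy0) Hb) as [j [b' [Hb' ->]]].
  exact (proj2 (Hs j) b' Hb' HBb).
Qed.
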